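(* Let $k\ge1$ and let $A_k$ be a $k$-atom with $n$ vertices. Then \[ \lambda_1(A_k) \geq \frac{k\sqrt{k}}{4\sqrt{n}} - 2. \]
   Context: $\lambda_1(H)$ denotes the largest eigenvalue of the adjacency matrix of a graph $H$. $k$-atoms are defined recursively: $K_1$ is the only $1$-atom. A graph $H$ is a $(k+1)$-atom if its vertices can be partitioned into an independent set $I$ and a set inducing a $k$-atom $A_k$ such that each vertex of $A_k$ has exactly one neighbor in $I$ and each vertex of $I$ has at least one neighbor in $A_k$. *)

From HB Require Import structures.
From mathcomp Require Import all_boot all_order all_algebra.
From mathcomp Require Import boolp classical_sets reals.
Set Implicit Arguments. Unset Strict Implicit. Unset Printing Implicit Defensive.
Import Order.TTheory GRing.Theory Num.Theory.

(* A finite simple graph: vertex type T : finType, edge relation e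
   (assumed symmetric and irreflexive in the theorem). *)

Definition independent (T : finType) (e : rel T) (I : {set T}) : Prop :=
  forall u v, u \in I -> v \in I -> ~~ e u v.

(* is_atom e k S : the subgraph of (T,e) induced by S is a k-atom. *)
Fixpoint is_atom (T : finType) (e : rel T) (k : nat) (S : {set T}) {struct k} : Prop :=
  match k with
  | 0 => False
  | k'.+1 =>
    if k' is 0 then #|S| = 1%N else
      exists (I A : {set T}),
        [/\ [disjoint I & A], I :|: A = S, independent e I /\
            is_atom e k' A,
            (forall v, v \in A -> #|[set u in I | e v u]| = 1%N) &
            (forall u, u \in I -> exists2 v, v \in A & e u v)]
  end.

Local Open Scope ring_scope.

Definition adjmx (R : nzRingType) (T : finType) (e : rel T) : 'M[R]_#|T| :=
  \matrix_(i, j) (e (enum_val i) (enum_val j))%:R.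

Definition lambda1 (R : realType) (n : nat) (M : 'M[R]_n) : R :=
  sup [set x : R | eigenvalue M x].

(* Write P(X) for the degree sum of the subgraph induced by X (twice its
   number of edges) and lambda for lambda_1.  Testing the Rayleigh quotient
   on the indicator vector of X gives P(X) <= lambda |X|.  If a (k+1)-atom S
   is split as I + A with A a k-atom, every vertex of A has exactly one
   neighbour in I, so P(S) >= P(A) + 2|A|; since lambda |A| >= P(A) >= k(k-1),
   induction gives 2k(k-1)(k-2) <= 3 lambda P(S).  For S = V this yields
   2k(k-1)(k-2) <= 3 lambda^2 n, and squaring shows that this implies
   k sqrt k / (4 sqrt n) - 2 <= lambda (using k <= n). *)

From HB Require Import structures.
From mathcomp Require Import all_boot all_order all_algebra.
From mathcomp Require Import boolp classical_sets reals.
From mathcomp Require Import complex lra zify.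
Set Implicit Arguments. Unset Strict Implicit. Unset Printing Implicit Defensive.
Import Order.TTheory GRing.Theory Num.Theory.
Local Open Scope ring_scope.

Section HermitianSpectrum.
Variables (C : numClosedFieldType) (n : nat).
Local Open Scope sesquilinear_scope.

Lemma eigenvalue_spectral_diag (A : 'M[C]_n) i :
  A \is normalmx -> eigenvalue A (spectral_diag A 0 i).
Proof.
move=> /orthomx_spectralP A_eq; set P := spectralmx A in A_eq.
have Punit : P \in unitmx := spectral_unit A.
apply/eigenvalueP; exists (row i P).
  rewrite {1}A_eq !mulmxA rowE -(mulmxA _ P) mulmxV // mulmx1 -rowE.
  by rewrite -[delta_mx 0 i *m _]rowE row_diag_mx -scalemxAl -rowE.
apply/eqP => /(congr1 (mulmx^~ (invmx P))).
rewrite rowE -mulmxA mulmxV // mulmx1 mul0mx => /matrixP /(_ 0 i).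
by rewrite !mxE /= eqxx; move/eqP; rewrite pnatr_eq0.
Qed.

Lemma hermsym_quad_le (A : 'M[C]_n) (mu : C) : A \is hermsymmx ->
  (forall i, spectral_diag A 0 i <= mu) ->
  forall x : 'rV_n, (x *m A *m x^t*) 0 0 <= mu * (x *m x^t*) 0 0.
Proof.
move=> A_herm d_le x.
have /orthomx_spectralP A_eq := hermitian_normalmx A_herm.
set P := spectralmx A in A_eq; set d := spectral_diag A in A_eq d_le.
have PV : invmx P = P^t* := invmx_unitary (spectral_unitarymx A).
set y := x *m P^t*.
have yC : y^t* = P *m x^t* by rewrite /y trmx_mul map_mxM trmxCK.
have -> : x *m A *m x^t* = y *m diag_mx d *m y^t*.
  by rewrite yC {1}A_eq PV !mulmxA.
have -> : x *m x^t* = y *m y^t*.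
  by rewrite yC /y !mulmxA -(mulmxA x) -PV mulVmx ?spectral_unit // mulmx1.
rewrite mul_mx_diag !mxE mulr_sumr; apply: ler_sum => j _.
by rewrite !mxE mulrAC [leRHS]mulrC ler_wpM2l ?mul_conjC_ge0.
Qed.

End HermitianSpectrum.

Section SymmetricRayleigh.
Variable R : realType.
Local Notation toC := (real_complex R).
Local Open Scope sesquilinear_scope.

Lemma real_complex_real (r : R) : toC r \is Num.real.
Proof. by apply/complex_realP; exists r. Qed.

Lemma symmetric_rayleigh_max n (A : 'M[R]_n) : A^T = A -> (0 < n)%N ->
  exists2 mu, eigenvalue A mu &
    forall x : 'rV_n, (x *m A *m x^T) 0 0 <= mu * (x *m x^T) 0 0.
Proof.
move=> A_sym n_gt0; pose Ac := map_mx toC A.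
have Ac_herm : Ac \is hermsymmx.
  apply: realsym_hermsym.
    by apply/is_hermitianmxP; rewrite expr0 scale1r map_mx_id // /Ac map_trmx A_sym.
  by apply/mxOverP => i j; rewrite mxE real_complex_real.
set d := spectral_diag Ac.
have dR i : toC (complex.Re (d 0 i)) = d 0 i.
  by apply: RRe_real; move/mxOverP: (hermitian_spectral_diag_real Ac_herm); apply.
pose j := [arg max_(i > Ordinal n_gt0) complex.Re (d 0 i)]%O.
have j_max i : complex.Re (d 0 i) <= complex.Re (d 0 j).
  by rewrite /j; case: arg_maxP => // ? _; apply.
exists (complex.Re (d 0 j)).
  have := eigenvalue_spectral_diag j (hermitian_normalmx Ac_herm).
  by rewrite -dR (eigenvalue_map toC).
move=> x; rewrite -lecR rmorphM /=.
have xC : (map_mx toC x)^t* = (map_mx toC x)^T.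
  by apply/matrixP => a b; rewrite !mxE conj_Creal // real_complex_real.
have -> : toC ((x *m A *m x^T) 0 0) =
          (map_mx toC x *m Ac *m (map_mx toC x)^t*) 0 0.
  by rewrite xC map_trmx -!map_mxM [RHS]mxE.
have -> : toC ((x *m x^T) 0 0) = (map_mx toC x *m (map_mx toC x)^t*) 0 0.
  by rewrite xC map_trmx -!map_mxM [RHS]mxE.
by apply: hermsym_quad_le => // i; rewrite -dR lecR.
Qed.

Lemma mulmx_trmx_ge0 n (x : 'rV[R]_n) : 0 <= (x *m x^T) 0 0.
Proof. by rewrite mxE sumr_ge0 // => i _; rewrite mxE -expr2 sqr_ge0. Qed.

Lemma mulmx_trmx_gt0 n (v : 'rV[R]_n) : v != 0 -> 0 < (v *m v^T) 0 0.
Proof.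
move=> v_neq0; rewrite lt_def mulmx_trmx_ge0 andbT; apply: contra v_neq0.
rewrite mxE psumr_eq0 => [/allP v0|i _]; last by rewrite mxE -expr2 sqr_ge0.
apply/eqP/rowP => i; have /eqP := v0 i (mem_index_enum i).
by rewrite !mxE -expr2 => /eqP; rewrite sqrf_eq0 => /eqP.
Qed.

Lemma quad_le_lambda1 n (A : 'M[R]_n) : A^T = A ->
  forall x : 'rV_n, (x *m A *m x^T) 0 0 <= lambda1 A * (x *m x^T) 0 0.
Proof.
case: n A => [|n] A A_sym x; first by rewrite !mxE !big_ord0 mulr0.
have [mu mu_eig mu_max] := symmetric_rayleigh_max A_sym (ltn0Sn n).
apply: le_trans (mu_max x) (ler_wpM2r (mulmx_trmx_ge0 x) _).
have eig_le a : eigenvalue A a -> a <= mu.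
  case/eigenvalueP => v vA v_neq0.
  by have := mu_max v; rewrite vA -scalemxAl mxE ler_pM2r ?mulmx_trmx_gt0.
by apply: ub_le_sup => //; exists mu => a /eig_le.
Qed.

End SymmetricRayleigh.

Section InducedDegrees.
Variables (T : finType) (e : rel T).
Local Open Scope nat_scope.

Definition degree_sum (X : {set T}) : nat := \sum_(u in X) \sum_(v in X) e u v.

Lemma degree_sum_set1 v : irreflexive e -> degree_sum [set v] = 0.
Proof. by move=> e_irr; rewrite /degree_sum !big_set1 e_irr. Qed.

Lemma big_setU_disjoint (I A : {set T}) (F : T -> nat) : [disjoint I & A] ->
  \sum_(u in I :|: A) F u = \sum_(u in I) F u + \sum_(u in A) F u.
Proof. by move=> IA; rewrite -bigU //; apply: eq_bigl => x; rewrite !inE. Qed.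

Lemma sum_adj_card u (I : {set T}) :
  \sum_(v in I) e u v = #|[set v in I | e u v]|.
Proof.
rewrite -sum1_card [RHS]big_mkcond [LHS]big_mkcond; apply: eq_bigr => v _.
by rewrite !inE; case: (v \in I); case: (e u v).
Qed.

Lemma degree_sum_setU_matched (I A : {set T}) : symmetric e -> [disjoint I & A] ->
  (forall v, v \in A -> #|[set u in I | e v u]| = 1) ->
  degree_sum A + 2 * #|A| <= degree_sum (I :|: A).
Proof.
move=> e_sym IA A_matched.
have split_nbhd u :
    \sum_(v in I :|: A) e u v = \sum_(v in I) e u v + \sum_(v in A) e u v.
  exact: big_setU_disjoint.
rewrite /degree_sum [leqRHS]big_setU_disjoint // !(eq_bigr _ (fun u _ => split_nbhd u)).
rewrite !big_split /=.
have A_to_I : \sum_(u in A) \sum_(v in I) e u v = #|A|.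
  by rewrite -sum1_card; apply: eq_bigr => u uA; rewrite sum_adj_card A_matched.
have I_to_A : \sum_(u in I) \sum_(v in A) e u v = #|A|.
  rewrite exchange_big -A_to_I; apply: eq_bigr => u _.
  by apply: eq_bigr => v _; rewrite e_sym.
rewrite A_to_I I_to_A; lia.
Qed.

Lemma is_atomSS k S : is_atom e k.+2 S ->
  exists I A : {set T}, [/\ [disjoint I & A], I :|: A = S, is_atom e k.+1 A &
    forall v, v \in A -> #|[set u in I | e v u]| = 1].
Proof. by case=> I [A [IA IAS [_ A_atom] A_matched _]]; exists I, A. Qed.

Lemma atom_card_ge k S : is_atom e k S -> k <= #|S|.
Proof.
elim: k S => [|k IH] S //; case: k IH => [|k] IH; first by move=> /= ->.
case/is_atomSS=> I [A [IA IAS A_atom A_matched]].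
have A_gt : k.+1 <= #|A| := IH A A_atom.
have /card_gt0P [v vA] : 0 < #|A| by apply: leq_trans A_gt.
have I_gt0 : 0 < #|I|.
  rewrite -(A_matched v vA) subset_leq_card //.
  by apply/fintype.subsetP => u; rewrite inE => /andP[].
by rewrite -IAS cardsU disjoint_setI0 // cards0 subn0 -add1n leq_add.
Qed.

Hypothesis e_sym : symmetric e.

Lemma atom_degree_sum_ge k S : is_atom e k S -> k * (k - 1) <= degree_sum S.
Proof.
elim: k S => [|k IH] S //; case: k IH => [|k] IH //.
case/is_atomSS=> I [A [IA IAS A_atom A_matched]].
have := degree_sum_setU_matched e_sym IA A_matched; rewrite IAS.
have := IH A A_atom; have := atom_card_ge A_atom; nia.
Qed.

End InducedDegrees.

Section AtomSpectralBound.
Variables (R : realType) (T : finType) (e : rel T).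
Hypothesis e_sym : symmetric e.

Lemma atom_degree_sum_cubic (lam : R) k S : 0 <= lam ->
  (forall X, (degree_sum e X)%:R <= lam * #|X|%:R) -> is_atom e k S ->
  2 * k%:R * (k%:R - 1) * (k%:R - 2) <= 3 * lam * (degree_sum e S)%:R.
Proof.
move=> lam_ge0 rayleigh; elim: k S => [|k IH] S //; case: k IH => [|k] IH.
  by rewrite subrr !mulr0 mul0r => _; rewrite !mulr_ge0.
case/is_atomSS=> I [A [IA IAS A_atom A_matched]].
have := degree_sum_setU_matched e_sym IA A_matched.
rewrite IAS -(ler_nat R) natrD natrM => S_ge.
have := atom_degree_sum_ge e_sym A_atom; rewrite subSS subn0 -(ler_nat R) natrM => A_ge.
have := IH A A_atom; have := rayleigh A.
rewrite -[k.+2%:R]natr1 -[k.+1%:R]natr1 => A_rayleigh A_cubic.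
have : 0 <= lam * ((degree_sum e S)%:R - ((degree_sum e A)%:R + 2 * #|A|%:R)).
  by rewrite mulr_ge0 // subr_ge0.
nra.
Qed.

Definition charvec (X : {set T}) : 'rV[R]_#|T| := \row_i (enum_val i \in X)%:R.

Lemma charvec_sqnorm X : (charvec X *m (charvec X)^T) 0 0 = #|X|%:R.
Proof.
transitivity (\sum_(u in T) ((u \in X)%:R * (u \in X)%:R : R)).
  by rewrite mxE (big_enum_val (A := T)) /=; apply: eq_bigr => i _; rewrite !mxE.
rewrite -sum1_card natr_sum [RHS]big_mkcond /=; apply: eq_bigr => u _.
by case: (u \in X); rewrite ?mulr1 ?mulr0.
Qed.

Lemma charvec_adj_quad X :
  (charvec X *m adjmx R e *m (charvec X)^T) 0 0 = (degree_sum e X)%:R.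
Proof.
transitivity (\sum_(u in T) \sum_(v in T)
               ((v \in X)%:R * (e v u)%:R * (u \in X)%:R : R)).
  rewrite mxE (big_enum_val (A := T)) /=; apply: eq_bigr => i _; rewrite !mxE.
  by rewrite (big_enum_val (A := T)) /= big_distrl; apply: eq_bigr => j _; rewrite !mxE.
rewrite /degree_sum natr_sum exchange_big [RHS]big_mkcond /=; apply: eq_bigr => v _.
case: (v \in X); last by rewrite big1 // => u _; rewrite !mul0r.
rewrite natr_sum [RHS]big_mkcond /=; apply: eq_bigr => u _.
by case: (u \in X); rewrite ?mulr1 ?mulr0 ?mul1r.
Qed.

Lemma degree_sum_le_lambda1 X :
  (degree_sum e X)%:R <= lambda1 (adjmx R e) * #|X|%:R.
Proof.
rewrite -charvec_adj_quad -charvec_sqnorm quad_le_lambda1 //.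
by apply/matrixP => i j; rewrite !mxE e_sym.
Qed.

Lemma lambda1_adjmx_ge0 (v : T) : irreflexive e -> 0 <= lambda1 (adjmx R e).
Proof.
move=> e_irr; have := degree_sum_le_lambda1 [set v].
by rewrite degree_sum_set1 // cards1 mulr1.
Qed.

End AtomSpectralBound.

Lemma cube_sqrt_bound (R : rcfType) (K N lam : R) : 1 <= K <= N -> 0 <= lam ->
  2 * K * (K - 1) * (K - 2) <= 3 * lam ^+ 2 * N ->
  K * Num.sqrt K / (4 * Num.sqrt N) - 2 <= lam.
Proof.
case/andP=> K_ge1 K_le lam_ge0 cubic.
have N_gt0 : 0 < N by lra.
rewrite lerBlDr ler_pdivrMr ?mulr_gt0 ?sqrtr_gt0 //.
rewrite -(@ler_pXn2r _ 2) // ?nnegrE; last 2 first.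
- by rewrite mulr_ge0 ?sqrtr_ge0 //; lra.
- by rewrite !mulr_ge0 ?sqrtr_ge0 //; lra.
rewrite !exprMn !sqr_sqrtr; [|lra|lra].
have : 0 <= K * (K - 2) ^+ 2 by rewrite mulr_ge0 ?sqr_ge0 //; lra.
have : 0 <= lam * N by rewrite mulr_ge0 //; lra.
nra.
Qed.

Theorem lemma5 (R : realType) (T : finType) (e : rel T)
  (e_sym : symmetric e) (e_irr : irreflexive e) (k : nat) (hk : (1 <= k)%N)
  (hatom : is_atom e k [set: T]) :
  (k%:R * Num.sqrt (k%:R : R)) / (4 * Num.sqrt (#|T|%:R)) - 2
    <= lambda1 (adjmx R e).
Proof.
have k_le : (k <= #|T|)%N by rewrite -cardsT; apply: atom_card_ge hatom.
have /card_gt0P [v _] : (0 < #|T|)%N by apply: leq_trans k_le.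
have lam_ge0 := lambda1_adjmx_ge0 R e_sym v e_irr.
have rayleigh := degree_sum_le_lambda1 R e_sym.
have cubic := atom_degree_sum_cubic e_sym lam_ge0 rayleigh hatom.
apply: (cube_sqrt_bound _ lam_ge0); first by rewrite ler1n hk ler_nat.
apply: (le_trans cubic); rewrite -mulrA expr2 -!mulrA.
by do 2 apply: ler_wpM2l => //; have := rayleigh [set: T]; rewrite cardsT.
Qed.
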